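(* Let $(\alpha_D)_D$ be a holomorphically contractible family of pseudometrics, and let $G_2=\{(z_1,z_2)\in\mathbb{C}^2: |z_1|(1+|z_2|)<1\}$. Then $\mathbb W\alpha_{G_2}$ is not upper semicontinuous on $G_2\times\mathbb{C}^2$.
   Context: $\Delta$ is the open unit disc in $\mathbb{C}$. A pseudometric on a domain $D\subset\mathbb{C}^n$ is a function $\eta:D\times\mathbb{C}^n\to[0,\infty)$ with $\eta(a;\lambda X)=|\lambda|\eta(a;X)$. A holomorphically contractible family of pseudometrics is an assignment of a pseudometric $\alpha_D$ to every domain $D\subset\mathbb{C}^n$, for all $n\ge1$, such that $\alpha_\Delta(z;X)=|X|/(1-|z|^2)$ and $\alpha_{D_2}(F(z);F'(z)X)\le\alpha_{D_1}(z;X)$ for all domains $D_1\subset\mathbb{C}^{n_1}$, $D_2\subset\mathbb{C}^{n_2}$, holomorphic $F:D_1\to D_2$, $z\in D_1$, $X\in\mathbb{C}^{n_1}$. (Such $\alpha_D$ lie in $\mathcal M(D)$.) $\mathcal M(D)$: pseudometrics $\eta$ on $D$ such that for every $a\in D$ there are $M,r>0$ with $\eta(z;X)\le M\|X\|$ for $z$ in the ball $\mathbb{B}(a,r)\subset D$, $X\in\mathbb{C}^n$. Wu pseudometric: for $\eta\in\mathcal M(D)$ and $a\in D$, let $\widehat\eta(a;X)=\sup p(X)$ over all $\mathbb{C}$-seminorms $p\le\eta(a;\cdot)$. Let $V_\eta(a)=\{X:\widehat\eta(a;X)=0\}$, $U_\eta(a)$ its orthogonal complement (standard Hermitian product), $m(\eta,a)=\dim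 U_\eta(a)$. Let $\mathcal F(\eta,a)$ be the set of positive semidefinite Hermitian forms $s$ on $\mathbb{C}^n$ with $\sqrt{s(X,X)}\le\eta(a;X)$ for all $X$, ordered by $\alpha\prec\beta$ iff $\det[\alpha(e_j,e_k)]\le\det[\beta(e_j,e_k)]$ for a basis $(e_j)$ of $U_\eta(a)$; it has a unique maximal element $s(\eta,a)$. Set $\widetilde{\mathbb W}\eta(a;X)=\sqrt{s(\eta,a)(X,X)}$ and $\mathbb W\eta(a;X)=\sqrt{m(\eta,a)}\,\widetilde{\mathbb W}\eta(a;X)$. *)

From HB Require Import structures.
From mathcomp Require Import all_boot all_order all_algebra.
From mathcomp Require Import boolp classical_sets reals.
From mathcomp Require Import complex.

Set Implicit Arguments.
Unset Strict Implicit.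
Unset Printing Implicit Defensive.

Import Order.TTheory GRing.Theory Num.Theory.
Local Open Scope ring_scope.
Local Open Scope classical_set_scope.

(* Throughout, R : realType, and the complex numbers are C = R[i].
   Vectors of C^n are ROW vectors 'rV[R[i]]_n, a linear map C^n1 -> C^n2 is
   a matrix L : 'M_(n1,n2) acting by X |-> X *m L. *)

Section Defs.
Variable R : realType.
Local Notation C := (R[i]).

Definition cabs (z : C) : R := Num.sqrt (complex.Re z ^+ 2 + complex.Im z ^+ 2).

Definition cconj (z : C) : C := Complex (complex.Re z) (- complex.Im z).

Definition hdot n (X Y : 'rV[C]_n) : C := \sum_i X 0 i * cconj (Y 0 i).

Definition cnorm n (X : 'rV[C]_n) : R := Num.sqrt (\sum_i cabs (X 0 i) ^+ 2).

Definition copen n (D : set 'rV[C]_n) : Prop :=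
  forall a, D a -> exists r : R, 0 < r /\ forall z, cnorm (z - a) < r -> D z.

Definition cconnected n (D : set 'rV[C]_n) : Prop :=
  forall A B : set 'rV[C]_n, copen A -> copen B ->
    D `<=` A `|` B -> D `&` A `&` B = set0 -> D `<=` A \/ D `<=` B.

Definition domain n (D : set 'rV[C]_n) : Prop :=
  copen D /\ cconnected D /\ D !=set0.

Definition cderiv n1 n2 (F : 'rV[C]_n1 -> 'rV[C]_n2) (z : 'rV[C]_n1)
    (L : 'M[C]_(n1, n2)) : Prop :=
  forall eps : R, 0 < eps -> exists delta : R, 0 < delta /\
    forall h, cnorm h < delta ->
      cnorm (F (z + h) - F z - h *m L) <= eps * cnorm h.

Definition holo_map n1 n2 (D1 : set 'rV[C]_n1) (D2 : set 'rV[C]_n2)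
    (F : 'rV[C]_n1 -> 'rV[C]_n2) : Prop :=
  (forall z, D1 z -> D2 (F z)) /\
  (forall z, D1 z -> exists L, cderiv F z L).

Definition unit_disc : set 'rV[C]_1 := [set z | cabs (z 0 0) < 1].

Definition G2 : set 'rV[C]_2 :=
  [set z | cabs (z 0 0) * (1 + cabs (z 0 1)) < 1].

(* A holomorphically contractible family: alpha n D is the pseudometric
   alpha_D for a domain D of C^(n+1) (so n+1 ranges over all dimensions >= 1);
   alpha n D a X is alpha_D(a;X). *)
Definition holo_contractible_family
    (alpha : forall n : nat, set 'rV[C]_n.+1 -> 'rV[C]_n.+1 -> 'rV[C]_n.+1 -> R)
    : Prop :=
  (forall n (D : set 'rV[C]_n.+1), domain D ->
     forall a X, D a -> 0 <= alpha n D a X /\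
       forall lam : C, alpha n D a (lam *: X) = cabs lam * alpha n D a X) /\
  (forall z X : 'rV[C]_1, unit_disc z ->
     alpha 0%N unit_disc z X = cabs (X 0 0) / (1 - cabs (z 0 0) ^+ 2)) /\
  (forall n1 n2 (D1 : set 'rV[C]_n1.+1) (D2 : set 'rV[C]_n2.+1)
          (F : 'rV[C]_n1.+1 -> 'rV[C]_n2.+1),
     domain D1 -> domain D2 -> holo_map D1 D2 F ->
     forall z L X, D1 z -> cderiv F z L ->
       alpha n2 D2 (F z) (X *m L) <= alpha n1 D1 z X).

Section Wu.
Variable n : nat.
Variable eta : 'rV[C]_n -> 'rV[C]_n -> R.
Variable a : 'rV[C]_n.

Definition cseminorm (p : 'rV[C]_n -> R) : Prop :=
  (forall X Y, p (X + Y) <= p X + p Y) /\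
  (forall (lam : C) X, p (lam *: X) = cabs lam * p X).

Definition eta_hat (X : 'rV[C]_n) : R :=
  sup [set p X | p in [set p | cseminorm p /\ forall Y, p Y <= eta a Y]].

Definition V_eta : set 'rV[C]_n := [set X | eta_hat X = 0].

Definition U_eta : set 'rV[C]_n := [set Y | forall X, V_eta X -> hdot X Y = 0].

Definition is_basis_U k (E : 'M[C]_(k, n)) : Prop :=
  row_free E /\ forall X, U_eta X <-> (X <= E)%MS.

Definition m_eta : nat := xget 0%N [set k | exists E : 'M[C]_(k, n), is_basis_U E].

Definition hform (S : 'M[C]_n) (X Y : 'rV[C]_n) : C :=
  (X *m S *m (map_mx cconj Y)^T) 0 0.

Definition hermitian (S : 'M[C]_n) : Prop := S^T = map_mx cconj S.

Definition F_eta : set 'M[C]_n :=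
  [set S | hermitian S /\ forall X, 0 <= hform S X X /\
     Num.sqrt (complex.Re (hform S X X)) <= eta a X].

Definition gram k (S : 'M[C]_n) (E : 'M[C]_(k, n)) : 'M[C]_k :=
  \matrix_(j, l) hform S (row j E) (row l E).

(* the order alpha < beta : det comparison on a basis of U (independent of
   the basis; we require it for every basis) *)
Definition prec_eta (S T : 'M[C]_n) : Prop :=
  forall k (E : 'M[C]_(k, n)), is_basis_U E -> \det (gram S E) <= \det (gram T E).

Definition s_eta : 'M[C]_n :=
  xget 0 [set S | F_eta S /\ forall T, F_eta T -> prec_eta T S].

Definition Wtilde (X : 'rV[C]_n) : R := Num.sqrt (complex.Re (hform s_eta X X)).

End Wu.

Definition Wu n (eta : 'rV[C]_n -> 'rV[C]_n -> R) (a X : 'rV[C]_n) : R :=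
  Num.sqrt (m_eta eta a)%:R * Wtilde eta a X.

Definition usc_on n (D : set 'rV[C]_n) (f : 'rV[C]_n -> 'rV[C]_n -> R) : Prop :=
  forall a X, D a -> forall eps : R, 0 < eps -> exists delta : R, 0 < delta /\
    forall b Y, D b -> cnorm (b - a) < delta -> cnorm (Y - X) < delta ->
      f b Y < f a X + eps.

End Defs.

(* At the origin every disc z |-> (0, r z) lies in G2, so alpha(0; e2) = 0: then e2 spans the
   null space V, m <= 1 and W alpha(0; e1) <= alpha(0; e1) <= 1.  At b = (eps, 0) the maps
   (z1, z2) |-> z1 (1 + s z2), |s| <= 1, into the disc give alpha(b; X) >= |X1 + s eps X2|;
   hence V = 0, m = 2, and averaging s = +-1 puts |X1|^2 + eps^2 |X2|^2 into F(alpha, b), so the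
   maximal form has determinant >= eps^2.  Its (2,2) entry is at most alpha(b; e2)^2, and the disc
   z |-> (eps, r z) gives alpha(b; e2) <= eps / (1 - eps); so its (1,1) entry is >= (1 - eps)^2
   and W alpha(b; e1) >= sqrt 2 (1 - eps), which stays away from 1 as eps -> 0. *)

From Pilot Require Import Defs.
From HB Require Import structures.
From mathcomp Require Import all_boot all_order all_algebra.
From mathcomp Require Import boolp classical_sets reals.
From mathcomp Require Import complex.
From mathcomp Require Import topology normedtype derive.
From mathcomp Require Import ring lra.

Set Implicit Arguments.
Unset Strict Implicit.
Unset Printing Implicit Defensive.
Import Order.TTheory GRing.Theory Num.Theory.
Import numFieldNormedType.Exports.
Local Open Scope ring_scope.
Local Open Scope classical_set_scope.
Local Open Scope complex_scope.

Section WuG2.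
Context {R : realType}.
Local Notation C := (R[i]).

Lemma cabsC (z : C) : (cabs z)%:C = `|z|.
Proof. by rewrite normc_def. Qed.

Lemma cabs_ge0 (z : C) : 0 <= cabs z.
Proof. exact: sqrtr_ge0. Qed.

Lemma cabsM (z w : C) : cabs (z * w) = cabs z * cabs w.
Proof. by apply: complexI; rewrite rmorphM /= !cabsC normrM. Qed.

Lemma cabsD (z w : C) : cabs (z + w) <= cabs z + cabs w.
Proof. by rewrite -lecR rmorphD /= !cabsC ler_normD. Qed.

Lemma cabsN (z : C) : cabs (- z) = cabs z.
Proof. by apply: complexI; rewrite !cabsC normrN. Qed.

Lemma cabsR (r : R) : cabs r%:C = `|r|.
Proof. by rewrite /cabs /= expr0n /= addr0 sqrtr_sqr. Qed.

Lemma cabs0 : cabs (0 : C) = 0.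
Proof. by rewrite -[0 : C]/(0%:C) cabsR normr0. Qed.

Lemma cabs1 : cabs (1 : C) = 1.
Proof. by rewrite -[1 : C]/(1%:C) cabsR normr1. Qed.

Lemma cabs_eq0 (z : C) : cabs z = 0 -> z = 0.
Proof. by move=> z0; apply/normr0_eq0; rewrite -cabsC z0. Qed.

Lemma cconjE (z : C) : cconj z = z^*.
Proof. by case: z. Qed.

Lemma mulc_conj (z : C) : z * z^* = (cabs z ^+ 2)%:C.
Proof. by rewrite -sqr_normc rmorphXn /= cabsC. Qed.

Lemma cabs_sqr (z : C) : cabs z ^+ 2 = complex.Re z ^+ 2 + complex.Im z ^+ 2.
Proof. by rewrite sqr_sqrtr // addr_ge0 ?sqr_ge0. Qed.

Lemma cabs_parallelogram (z w : C) :
  cabs (z + w) ^+ 2 + cabs (z - w) ^+ 2 = 2 * (cabs z ^+ 2 + cabs w ^+ 2).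
Proof. by rewrite !cabs_sqr; case: z w => [x0 y0] [x1 y1] /=; ring. Qed.

Lemma cnorm_ge0 n (X : 'rV[C]_n) : 0 <= cnorm X.
Proof. exact: sqrtr_ge0. Qed.

Lemma cabs_le_cnorm n (X : 'rV[C]_n) i : cabs (X 0 i) <= cnorm X.
Proof.
rewrite -[cabs _]ger0_norm ?cabs_ge0 // -sqrtr_sqr; apply: ler_wsqrtr.
by rewrite (bigD1 i) //= lerDl; apply: sumr_ge0 => j _; exact: sqr_ge0.
Qed.

Lemma cnorm0 n : cnorm (0 : 'rV[C]_n) = 0.
Proof. by rewrite /cnorm big1 ?sqrtr0 // => i _; rewrite mxE cabs0 expr0n. Qed.

Lemma cnormZ n (c : C) (X : 'rV[C]_n) : cnorm (c *: X) = cabs c * cnorm X.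
Proof.
rewrite /cnorm (eq_bigr (fun i => cabs c ^+ 2 * cabs (X 0 i) ^+ 2)); last first.
  by move=> i _; rewrite mxE cabsM exprMn.
by rewrite -mulr_sumr sqrtrM ?sqr_ge0 // sqrtr_sqr ger0_norm ?cabs_ge0.
Qed.

Lemma cabs_coord_le n (z a : 'rV[C]_n) i :
  cabs (z 0 i) <= cabs (a 0 i) + cnorm (z - a).
Proof.
have -> : z 0 i = a 0 i + (z - a) 0 i by rewrite !mxE addrCA subrr addr0.
by apply: le_trans (cabsD _ _) _; rewrite lerD2l cabs_le_cnorm.
Qed.

Lemma big_ord2 (V : zmodType) (F : 'I_2 -> V) : \sum_(k < 2) F k = F 0 + F 1.
Proof. by rewrite big_ord_recr big_ord1 /=; congr (F _ + F _); apply/val_inj. Qed.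

Lemma ord2P (i : 'I_2) : i = 0 \/ i = 1.
Proof. by case: i => [[|[|k]] Hk]; [left|right|]; rewrite //; apply/val_inj. Qed.

Lemma cnorm2 (X : 'rV[C]_2) :
  cnorm X = Num.sqrt (cabs (X 0 0) ^+ 2 + cabs (X 0 1) ^+ 2).
Proof. by rewrite /cnorm big_ord2. Qed.

Lemma cnorm1 (X : 'rV[C]_1) : cnorm X = cabs (X 0 0).
Proof. by rewrite /cnorm big_ord1 sqrtr_sqr ger0_norm ?cabs_ge0. Qed.

Definition starlike n (D : set 'rV[C]_n) :=
  forall z (t : R), D z -> 0 <= t <= 1 -> D (t%:C *: z).

Lemma open_scale_preimage n (E : set 'rV[C]_n) (z : 'rV[C]_n) :
  copen E -> open [set t : R | E (t%:C *: z)].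
Proof.
move=> oE; rewrite openE => t Et; apply/nbhs_ballP.
have [r [r0 hr]] := oE _ Et.
have z1 : 0 < cnorm z + 1 by rewrite ltr_wpDl ?cnorm_ge0.
exists (r / (cnorm z + 1)) => /=; first by rewrite divr_gt0.
move=> s; rewrite -ball_normE /= ltr_pdivlMr // => hs; apply: hr.
rewrite -scalerBl -rmorphB cnormZ cabsR distrC; apply: le_lt_trans hs.
by rewrite ler_wpM2l ?lerDl.
Qed.

(* Pull the cover back along the segment [0, z] and use the connectedness of [0, 1]. *)
Lemma starlike_cover_sub n (D A B : set 'rV[C]_n) :
  starlike D -> copen A -> copen B -> D `<=` A `|` B -> D `&` A `&` B = set0 ->
  A 0 -> D `<=` A.
Proof.
move=> Dstar oA oB DAB DAB0 A0 z Dz.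
have Dseg t : `[0, 1] t -> D (t%:C *: z) by rewrite /= in_itv /=; exact: Dstar.
pose A' := [set t : R | A (t%:C *: z)].
have seg : `[0, 1] `&` A' = `[0, 1].
  apply: segment_connected.
  - by exists 0; split; rewrite /= ?in_itv /= ?lexx ?ler01 // /A' /= scale0r.
  - by exists A'; [exact: open_scale_preimage|].
  - exists (~` [set t : R | B (t%:C *: z)]).
      exact/open_closedC/open_scale_preimage.
    apply/seteqP; split => t [t01 Pt]; split => //.
      move=> Bt; suff : (D `&` A `&` B) (t%:C *: z) by rewrite DAB0.
      by split; [split; [exact: Dseg|]|].
    by case: (DAB _ (Dseg t t01)).
have : (`[0, 1] `&` A') 1 by rewrite seg /= in_itv /= lexx ler01.
by case=> _; rewrite /A' /= scale1r.
Qed.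

Lemma starlike_domain n (D : set 'rV[C]_n) :
  copen D -> D 0 -> starlike D -> domain D.
Proof.
move=> oD D0 Dstar; split=> //; split; last by exists 0.
move=> A B oA oB DAB DAB0; case: (DAB _ D0) => [A0|B0].
  by left; exact: (starlike_cover_sub Dstar oA oB).
right; apply: (starlike_cover_sub Dstar oB oA) => //.
  by move=> x /DAB [] ?; [right|left].
by rewrite setIAC.
Qed.

Lemma G2_open : copen (@G2 R).
Proof.
move=> a; rewrite /G2 /= => Ga.
set p := cabs (a 0 0) in Ga *; set q := cabs (a 0 1) in Ga *.
have p0 : 0 <= p by exact: cabs_ge0.
have q0 : 0 <= q by exact: cabs_ge0.
exists ((1 - p * (1 + q)) / (p + q + 2)); split.
  by rewrite divr_gt0 // ?subr_gt0 //; lra.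
move=> z; have := cabs_coord_le z a 0; have := cabs_coord_le z a 1.
rewrite -/p -/q; set d := cnorm (z - a) => h1 h0 hz.
have d0 : 0 <= d by exact: cnorm_ge0.
have pq2 : 0 < p + q + 2 by lra.
rewrite ltr_pdivlMr // in hz.
have z0 := cabs_ge0 (z 0 0); have z1 := cabs_ge0 (z 0 1).
have d1 : d < 1 by nra.
apply: (@le_lt_trans _ _ ((p + d) * (1 + q + d))); first by apply: ler_pM; lra.
nra.
Qed.

Lemma G2_starlike : starlike (@G2 R).
Proof.
move=> z t; rewrite /G2 /= !mxE !cabsM cabsR => Gz /andP[t0 t1].
rewrite ger0_norm //; apply: le_lt_trans Gz.
have z0 := cabs_ge0 (z 0 0); have z1 := cabs_ge0 (z 0 1).
by apply: ler_pM; nra.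
Qed.

Lemma G2_0 : @G2 R 0.
Proof. by rewrite /G2 /= mxE cabs0 mul0r. Qed.

Lemma G2_domain : domain (@G2 R).
Proof. exact: starlike_domain G2_open G2_0 G2_starlike. Qed.

Lemma unit_disc0 : @unit_disc R 0.
Proof. by rewrite /unit_disc /= mxE cabs0. Qed.

Lemma unit_disc_domain : domain (@unit_disc R).
Proof.
apply: starlike_domain unit_disc0 _.
  move=> a; rewrite /unit_disc /= => Da.
  exists (1 - cabs (a 0 0)); split; first by rewrite subr_gt0.
  by move=> z; have := cabs_coord_le z a 0; lra.
move=> z t; rewrite /unit_disc /= mxE cabsM cabsR => Dz /andP[t0 t1].
by rewrite ger0_norm //; have := cabs_ge0 (z 0 0); nra.
Qed.

Definition mk1 (u : C) : 'rV[C]_1 := \row_j u.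
Definition mk2 (u v : C) : 'rV[C]_2 := \row_j (if j == 0 then u else v).

Lemma mk1E u : mk1 u 0 0 = u. Proof. by rewrite mxE. Qed.
Lemma mk2E0 u v : mk2 u v 0 0 = u. Proof. by rewrite mxE. Qed.
Lemma mk2E1 u v : mk2 u v 0 1 = v. Proof. by rewrite mxE. Qed.

Definition e1 : 'rV[C]_2 := mk2 1 0.
Definition e2 : 'rV[C]_2 := mk2 0 1.

Lemma rV1P (X Y : 'rV[C]_1) : X 0 0 = Y 0 0 -> X = Y.
Proof. by move=> XY; apply/rowP => j; rewrite (ord1 j). Qed.

Lemma rV2P (X Y : 'rV[C]_2) : X 0 0 = Y 0 0 -> X 0 1 = Y 0 1 -> X = Y.
Proof. by move=> XY0 XY1; apply/rowP => j; case: (ord2P j) => ->. Qed.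

Lemma mulmx12E (X : 'rV[C]_1) (L : 'M[C]_(1, 2)) j : (X *m L) 0 j = X 0 0 * L 0 j.
Proof. by rewrite mxE big_ord1. Qed.

Lemma mulmx21E (X : 'rV[C]_2) (L : 'M[C]_(2, 1)) :
  (X *m L) 0 0 = X 0 0 * L 0 0 + X 0 1 * L 1 0.
Proof. by rewrite mxE big_ord2. Qed.

Lemma affine_cderiv n1 n2 (v0 : 'rV[C]_n2) (L : 'M[C]_(n1, n2)) z :
  cderiv (fun x => v0 + x *m L) z L.
Proof.
move=> eps eps0; exists 1; split=> // h _.
rewrite mulmxDl addrA (addrC (v0 + z *m L)) addrK subrr cnorm0.
by rewrite mulr_ge0 ?cnorm_ge0 ?ltW.
Qed.

Definition G2_to_disc (s : C) (z : 'rV[C]_2) : 'rV[C]_1 :=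
  mk1 (z 0 0 * (1 + s * z 0 1)).

Definition G2_to_disc_deriv (s : C) (z : 'rV[C]_2) : 'M[C]_(2, 1) :=
  \matrix_(i, j) (if i == 0 then 1 + s * z 0 1 else s * z 0 0).

Lemma G2_to_disc_cderiv s z :
  cabs s <= 1 -> cderiv (G2_to_disc s) z (G2_to_disc_deriv s z).
Proof.
move=> s1 eps eps0; exists eps; split=> // h hh.
have -> : G2_to_disc s (z + h) - G2_to_disc s z - h *m G2_to_disc_deriv s z =
          mk1 (s * h 0 0 * h 0 1).
  by apply: rV1P; rewrite !mxE /= big_ord2 !mxE /=; ring.
rewrite cnorm1 mk1E !cabsM.
have hh2 : cabs (h 0 0) * cabs (h 0 1) <= eps * cnorm h.
  apply: ler_pM; rewrite ?cabs_ge0 ?cabs_le_cnorm //.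
  exact: le_trans (cabs_le_cnorm h 0) (ltW hh).
apply: le_trans hh2; rewrite -mulrA ler_piMl ?mulr_ge0 ?cabs_ge0 //.
Qed.

Lemma G2_to_disc_holo s : cabs s <= 1 -> holo_map (@G2 R) (@unit_disc R) (G2_to_disc s).
Proof.
move=> s1; split=> [z|z _]; last by exists (G2_to_disc_deriv s z); exact: G2_to_disc_cderiv.
rewrite /G2 /unit_disc /= mk1E cabsM => Gz; apply: le_lt_trans Gz.
rewrite ler_wpM2l ?cabs_ge0 //; apply: le_trans (cabsD _ _) _.
by rewrite cabs1 lerD2l cabsM; have := cabs_ge0 (z 0 1); nra.
Qed.

Section WuGeneral.
Variables (n : nat) (eta : 'rV[C]_n -> 'rV[C]_n -> R) (a : 'rV[C]_n).
Hypothesis eta_ge0 : forall X, 0 <= eta a X.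

Lemma cseminorm_ge0 (p : 'rV[C]_n -> R) X : cseminorm p -> 0 <= p X.
Proof.
case=> pD pZ; have := pD X (- X).
rewrite subrr -(scale0r (0 : 'rV[C]_n)) pZ cabs0 mul0r.
by rewrite -scaleN1r pZ cabsN cabs1 mul1r; lra.
Qed.

Lemma cseminorm_le_eta_hat (p : 'rV[C]_n -> R) X :
  cseminorm p -> (forall Y, p Y <= eta a Y) -> p X <= eta_hat eta a X.
Proof.
move=> hp p_le; apply: ub_le_sup; last by exists p.
by exists (eta a X) => _ [q [_ q_le] <-].
Qed.

Lemma eta_hat_eq0 X : eta a X = 0 -> eta_hat eta a X = 0.
Proof.
move=> etaX0; rewrite /eta_hat.
set P := [set p | _ /\ _].
suff -> : [set p X | p in P] = [set 0] by exact: sup1.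
apply/seteqP; split=> y /=.
  case=> p [hp p_le] <-; apply/le_anti; rewrite cseminorm_ge0 //.
  by rewrite -etaX0 p_le.
move=> ->; exists (fun=> 0) => //; split=> //.
by split=> [X1 Y|l Y]; rewrite ?addr0 ?mulr0.
Qed.

Lemma basis_U_full_size k (E : 'M[C]_(k, n)) :
  (forall Y, U_eta eta a Y) -> is_basis_U eta a E -> k = n.
Proof.
move=> Ufull [Efree EU]; have rkE : \rank E = k by apply/eqP.
have sE : (1%:M <= E)%MS by apply/row_subP => i; apply/EU.
have := mxrankS sE; have := rank_leq_col E.
by rewrite mxrank1 rkE => kn nk; apply/eqP; rewrite eqn_leq kn nk.
Qed.

Lemma basis_U_full1 : (forall Y, U_eta eta a Y) -> is_basis_U eta a 1%:M.
Proof. by split; [rewrite /row_free mxrank1 | split=> // _; exact: submx1]. Qed.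

Lemma m_eta_full : (forall Y, U_eta eta a Y) -> m_eta eta a = n.
Proof.
move=> Ufull; apply: xget_unique => [|k [E /(basis_U_full_size Ufull)]] //.
by exists 1%:M; exact: basis_U_full1.
Qed.

Lemma Wtilde_le X : Wtilde eta a X <= eta a X.
Proof.
rewrite /Wtilde /s_eta; set P := [set S | _ /\ _].
have [[S PS]|noP] := pselect (exists S, P S); last first.
  rewrite xgetPN; last by move=> S PS; apply: noP; exists S.
  by rewrite /hform mulmx0 mul0mx mxE sqrtr0.
by have [[_ /(_ X) []]] := xgetPex 0 (ex_intro _ S PS).
Qed.

End WuGeneral.

Lemma cseminorm_lin2 (c : C) : cseminorm (fun Y : 'rV[C]_2 => cabs (Y 0 0 + Y 0 1 * c)).
Proof.
split=> [Y Z|l Y]; rewrite !mxE; last by rewrite -cabsM; congr cabs; ring.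
have -> : Y 0 0 + Z 0 0 + (Y 0 1 + Z 0 1) * c = (Y 0 0 + Y 0 1 * c) + (Z 0 0 + Z 0 1 * c).
  by ring.
exact: cabsD.
Qed.

Lemma m_eta_le1 (eta : 'rV[C]_2 -> 'rV[C]_2 -> R) a :
  V_eta eta a e2 -> (m_eta eta a <= 1)%N.
Proof.
move=> Ve2; rewrite /m_eta; set P := [set k | _].
have [[k Pk]|noP] := pselect (exists k, P k); last first.
  by rewrite xgetPN // => k Pk; apply: noP; exists k.
have [E [Efree EU]] := xgetPex 0%N (ex_intro _ k Pk).
have rkE : \rank E = xget 0%N P by apply/eqP.
have sE : (E <= e1)%MS.
  apply/row_subP => i; have /EU /(_ _ Ve2) := row_sub i E.
  rewrite /hdot big_ord2 !mxE /= mul0r mul1r add0r cconjE => /eqP.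
  rewrite conjc_eq0 => /eqP Ei1.
  have -> : row i E = E i 0 *: e1 by apply: rV2P; rewrite !mxE /= ?mulr1 ?mulr0.
  exact/scalemx_sub/submx_refl.
by rewrite -rkE (leq_trans (mxrankS sE)) ?rank_leq_row.
Qed.

Lemma gramE n k (S : 'M[C]_n) (E : 'M[C]_(k, n)) :
  gram S E = E *m S *m (map_mx (@cconj R) E)^T.
Proof.
apply/matrixP => i j; rewrite /gram /hform !mxE.
apply: eq_bigr => l _; rewrite !mxE; congr (_ * _).
by apply: eq_bigr => m _; rewrite !mxE.
Qed.

Lemma det_gram n (S E : 'M[C]_n) : \det (gram S E) = \det S * (cabs (\det E) ^+ 2)%:C.
Proof.
rewrite gramE (_ : @cconj R = conjc); last by apply: funext => z; rewrite cconjE.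
by rewrite !det_mulmx det_tr det_map_mx /= -mulc_conj (mulrC (\det E)) mulrA.
Qed.

(* A basis of a full [U_eta] is square, and [det_gram] scales both determinants by [|det E|^2]. *)
Lemma prec_eta_full n (eta : 'rV[C]_n -> 'rV[C]_n -> R) a (S T : 'M[C]_n) :
  (forall Y, U_eta eta a Y) -> prec_eta eta a T S <-> \det T <= \det S.
Proof.
move=> Ufull; split=> [TS|TS k E EU].
  by have := TS _ _ (basis_U_full1 Ufull); rewrite !det_gram det1 cabs1 expr1n !mulr1.
have kn := basis_U_full_size Ufull EU; subst k.
by rewrite !det_gram ler_wpM2r // lecR sqr_ge0.
Qed.

(* [v] = (a, d, x, y) encodes the Hermitian matrix [[a, x + iy], [x - iy, d]]. *)
Definition herm2 (v : 'rV[R]_4) : 'M[C]_2 :=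
  \matrix_(i, j) if i == 0 then (if j == 0 then (v 0 0)%:C else Complex (v 0 2) (v 0 3))
                 else (if j == 0 then Complex (v 0 2) (- v 0 3) else (v 0 1)%:C).

Definition herm2_coord (S : 'M[C]_2) : 'rV[R]_4 :=
  \row_k if k == 0 then complex.Re (S 0 0) else if k == 1 then complex.Re (S 1 1)
         else if k == 2 then complex.Re (S 0 1) else complex.Im (S 0 1).

Definition herm2_form (v : 'rV[R]_4) (X : 'rV[C]_2) : R :=
  v 0 0 * (complex.Re (X 0 0) ^+ 2 + complex.Im (X 0 0) ^+ 2) +
  v 0 1 * (complex.Re (X 0 1) ^+ 2 + complex.Im (X 0 1) ^+ 2) +
  2 * (v 0 2 * (complex.Re (X 0 0) * complex.Re (X 0 1) + complex.Im (X 0 0) * complex.Im (X 0 1))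
     - v 0 3 * (complex.Im (X 0 0) * complex.Re (X 0 1) - complex.Re (X 0 0) * complex.Im (X 0 1))).

Definition herm2_det (v : 'rV[R]_4) : R := v 0 0 * v 0 1 - v 0 2 ^+ 2 - v 0 3 ^+ 2.

Definition herm2_diag (a d : R) : 'rV[R]_4 :=
  \row_k if k == 0 then a else if k == 1 then d else 0.

Lemma herm2_form_diag a d X :
  herm2_form (herm2_diag a d) X = a * cabs (X 0 0) ^+ 2 + d * cabs (X 0 1) ^+ 2.
Proof. by rewrite /herm2_form !mxE /= !cabs_sqr; ring. Qed.

Lemma herm2_form_e1 v : herm2_form v e1 = v 0 0.
Proof. by rewrite /herm2_form !mxE /=; ring. Qed.

Lemma herm2_form_e2 v : herm2_form v e2 = v 0 1.
Proof. by rewrite /herm2_form !mxE /=; ring. Qed.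

Lemma herm2_det_diag a d : herm2_det (herm2_diag a d) = a * d.
Proof. by rewrite /herm2_det !mxE /=; ring. Qed.

Lemma herm2_hermitian v : Defs.hermitian (herm2 v).
Proof.
apply/matrixP => i j; rewrite !mxE.
by case: (ord2P i) => ->; case: (ord2P j) => -> /=; rewrite /cconj /= ?oppr0 ?opprK.
Qed.

Lemma herm2_coordK S : Defs.hermitian S -> herm2 (herm2_coord S) = S.
Proof.
move=> hS; have Sji i j : S j i = cconj (S i j).
  by have := congr1 (fun M : 'M[C]_2 => M i j) hS; rewrite !mxE.
have Sii i : S i i = (complex.Re (S i i))%:C.
  have := Sji i i; case: (S i i) => x y /= [] /eqP.
  by rewrite -subr_eq0 opprK -mulr2n mulrn_eq0 /= => /eqP ->.
apply/matrixP => i j; rewrite !mxE.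
case: (ord2P i) => ->; case: (ord2P j) => -> /=; rewrite ?[RHS]Sii //.
by case: (S 0 1).
Qed.

Lemma hform_herm2 v X : hform (herm2 v) X X = (herm2_form v X)%:C.
Proof.
rewrite /hform !mxE !big_ord2 !mxE !big_ord2 !mxE /= /herm2_form.
move: (X 0 0) (X 0 1) => [x0 y0] [x1 y1].
by apply/eqP; rewrite eq_complex /=; apply/andP; split; apply/eqP; ring.
Qed.

Lemma det_mx2 (T : comRingType) (A : 'M[T]_2) : \det A = A 0 0 * A 1 1 - A 0 1 * A 1 0.
Proof.
rewrite (expand_det_row _ 0) big_ord_recr big_ord1 /cofactor /= !det_mx11 !mxE.
have -> : widen_ord (leqnSn 1) ord0 = 0 :> 'I_2 by apply/val_inj.
have -> : ord_max = 1 :> 'I_2 by apply/val_inj.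
have -> : lift 0 0 = 1 :> 'I_2 by apply/val_inj.
have -> : lift 1 0 = 0 :> 'I_2 by apply/val_inj.
by rewrite /= expr0 expr1 mul1r mulN1r mulrN.
Qed.

Lemma det_herm2 v : \det (herm2 v) = (herm2_det v)%:C.
Proof.
rewrite det_mx2 !mxE /= /herm2_det.
by apply/eqP; rewrite eq_complex /=; apply/andP; split; apply/eqP; ring.
Qed.

Lemma F_eta_herm2 (eta : 'rV[C]_2 -> 'rV[C]_2 -> R) b v :
  (forall X, 0 <= eta b X) ->
  F_eta eta b (herm2 v) <-> forall X, 0 <= herm2_form v X <= eta b X ^+ 2.
Proof.
move=> eta_ge0.
have le_sqrt X : (Num.sqrt (herm2_form v X) <= eta b X) = (herm2_form v X <= eta b X ^+ 2).
  by rewrite -{1}(ger0_norm (eta_ge0 X)) -sqrtr_sqr ler_sqrt ?sqr_ge0.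
split=> [[_ hF] X|hF].
  by have [] := hF X; rewrite hform_herm2 ler0c /= le_sqrt => -> ->.
split=> [|X]; first exact: herm2_hermitian.
by rewrite hform_herm2 ler0c /= le_sqrt; apply/andP/hF.
Qed.

Section Continuity.
Variable T : topologicalType.
Implicit Types f g : T -> R.

Lemma continuous_addf f g : continuous f -> continuous g -> continuous (fun x => f x + g x).
Proof. by move=> cf cg x; have := continuousD (cf x) (cg x); exact. Qed.

Lemma continuous_mulf f g : continuous f -> continuous g -> continuous (fun x => f x * g x).
Proof. by move=> cf cg x; have := continuousM (cf x) (cg x); exact. Qed.

Lemma continuous_oppf f : continuous f -> continuous (fun x => - f x).
Proof. by move=> cf x; have := continuousN (cf x); exact. Qed.

End Continuity.

Ltac continuous_poly := repeat first
  [ apply: coord_continuous | apply: cst_continuous | apply: continuous_addf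
  | apply: continuous_mulf | apply: continuous_oppf ].

Lemma herm2_form_continuous X : continuous (herm2_form ^~ X).
Proof. by rewrite /herm2_form; continuous_poly. Qed.

Lemma herm2_det_continuous : continuous herm2_det.
Proof. by rewrite /herm2_det; under eq_fun do rewrite !expr2; continuous_poly. Qed.

Definition herm2_params (eta : 'rV[C]_2 -> 'rV[C]_2 -> R) b : set 'rV[R]_4 :=
  [set v | forall X, 0 <= herm2_form v X <= eta b X ^+ 2].

Lemma herm2_form_mk2 v x0 y0 x1 y1 :
  herm2_form v (mk2 (Complex x0 y0) (Complex x1 y1)) =
  v 0 0 * (x0 ^+ 2 + y0 ^+ 2) + v 0 1 * (x1 ^+ 2 + y1 ^+ 2) +
  2 * (v 0 2 * (x0 * x1 + y0 * y1) - v 0 3 * (y0 * x1 - x0 * y1)).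
Proof. by rewrite /herm2_form mk2E0 mk2E1. Qed.

Lemma ord4P (i : 'I_4) : [\/ i = 0, i = 1, i = 2 | i = 3].
Proof.
by case: i => [[|[|[|[|k]]]] Hk]; [apply: Or41|apply: Or42|apply: Or43|apply: Or44|];
  rewrite //; apply/val_inj.
Qed.

(* Testing the form on six vectors bounds all four coordinates. *)
Lemma herm2_params_bounded eta b :
  exists M, herm2_params eta b `<=` [set v | forall i, `[-M, M] (v 0 i)].
Proof.
pose M := eta b (mk2 (Complex 1 0) (Complex 0 0)) ^+ 2 +
          eta b (mk2 (Complex 0 0) (Complex 1 0)) ^+ 2.
exists M => v hv i.
have /andP[h1 h1'] := hv (mk2 (Complex 1 0) (Complex 0 0)).
have /andP[h2 h2'] := hv (mk2 (Complex 0 0) (Complex 1 0)).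
have /andP[h3 _] := hv (mk2 (Complex 1 0) (Complex 1 0)).
have /andP[h4 _] := hv (mk2 (Complex 1 0) (Complex (-1) 0)).
have /andP[h5 _] := hv (mk2 (Complex 1 0) (Complex 0 1)).
have /andP[h6 _] := hv (mk2 (Complex 1 0) (Complex 0 (-1))).
move: h1 h1' h2 h2' h3 h4 h5 h6; rewrite !herm2_form_mk2 /= in_itv /= /M.
by set A1 := eta b _; set A2 := eta b _; case: (ord4P i) => -> *; nra.
Qed.

Lemma herm2_params_compact eta b : compact (herm2_params eta b).
Proof.
have [M KM] := herm2_params_bounded eta b.
rewrite -(setIidr KM); apply: compact_closedI.
  by apply: (@rV_compact _ _ (fun=> `[-M, M])) => _; exact: segment_compact.
have -> : herm2_params eta b = \bigcap_(X in setT)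
    ([set v | 0 <= herm2_form v X] `&` [set v | herm2_form v X <= eta b X ^+ 2]).
  apply/seteqP; split=> v /= hv X; first by move=> _; apply/andP; exact: hv.
  by have [? ?] := hv X I; apply/andP.
apply: closed_bigI => X _; apply: closedI.
  apply: (@preimage_closed _ _ (herm2_form ^~ X) [set x | 0 <= x]); last exact: closed_ge.
  by move=> v _; exact: herm2_form_continuous.
apply: (@preimage_closed _ _ (herm2_form ^~ X) [set x | x <= _]); last exact: closed_le.
by move=> v _; exact: herm2_form_continuous.
Qed.

(* [s_eta] is picked with [xget], so it is the junk value [0] unless a maximal form exists;
   on a full [U_eta] maximality means maximal determinant, attained on the compact parameter set. *)
Lemma s_eta2_spec (eta : 'rV[C]_2 -> 'rV[C]_2 -> R) b :
  (forall X, 0 <= eta b X) -> (forall Y, U_eta eta b Y) ->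
  exists v, [/\ s_eta eta b = herm2 v, herm2_params eta b v &
    forall w, herm2_params eta b w -> herm2_det w <= herm2_det v].
Proof.
move=> eta_ge0 Ufull; set K := herm2_params eta b.
have K0 : K 0 by move=> X; rewrite /herm2_form !mxE !mul0r subrr mulr0 !addr0 lexx sqr_ge0.
have [c /set_mem Kc c_max] := EVT_max_rV (ex_intro _ 0 K0) (@herm2_params_compact eta b)
  (continuous_subspaceT herm2_det_continuous).
have F_coord T : F_eta eta b T -> K (herm2_coord T).
  by case=> hT hF; apply/(F_eta_herm2 _ eta_ge0); rewrite herm2_coordK.
have exS : exists S, F_eta eta b S /\ forall T, F_eta eta b T -> prec_eta eta b T S.
  exists (herm2 c); split=> [|T FT]; first exact/F_eta_herm2.
  apply/prec_eta_full => //; rewrite -[T](herm2_coordK FT.1) !det_herm2 lecR.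
  by apply: c_max; rewrite inE; exact: F_coord.
have [Fs s_max] := xgetPex 0 exS; rewrite -/(s_eta eta b) in Fs s_max.
exists (herm2_coord (s_eta eta b)); split; first by rewrite herm2_coordK //; case: Fs.
  exact: F_coord.
move=> w Kw; rewrite -lecR -!det_herm2 herm2_coordK; last by case: Fs.
by apply/(prec_eta_full _ _ Ufull)/s_max/F_eta_herm2.
Qed.

Definition axis_pt (eps : R) : 'rV[C]_2 := mk2 eps%:C 0.

Lemma G2_axis_pt (eps : R) : 0 <= eps < 1 -> G2 (axis_pt eps).
Proof.
by case/andP=> eps0 eps1; rewrite /G2 /= mk2E0 mk2E1 cabsR cabs0 addr0 mulr1 ger0_norm.
Qed.

Lemma cnorm_axis_pt (eps : R) : 0 <= eps -> cnorm (axis_pt eps) = eps.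
Proof.
by move=> eps0; rewrite cnorm2 mk2E0 mk2E1 cabsR cabs0 expr0n addr0 sqrtr_sqr !ger0_norm.
Qed.

Section ContractibleFamily.
Variable alpha : forall n : nat, set 'rV[C]_n.+1 -> 'rV[C]_n.+1 -> 'rV[C]_n.+1 -> R.
Hypothesis alpha_hcf : holo_contractible_family alpha.
Local Notation alphaG2 := (@alpha 1%N (@G2 R)).

Lemma alphaG2_ge0 (z X : 'rV[C]_2) : G2 z -> 0 <= alphaG2 z X.
Proof. by case: alpha_hcf => hp _ Gz; have [] := hp 1%N _ G2_domain z X Gz. Qed.

Lemma alphaG2_le_disc (v0 : 'rV[C]_2) (L : 'M[C]_(1, 2)) :
  (forall z, unit_disc z -> G2 (v0 + z *m L)) ->
  forall X, alphaG2 v0 (X *m L) <= cabs (X 0 0).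
Proof.
case: alpha_hcf => _ [alpha_disc contr] Gdisc X.
have hol : holo_map (@unit_disc R) (@G2 R) (fun z => v0 + z *m L).
  by split=> [|z _]; [exact: Gdisc | exists L; exact: affine_cderiv].
have := contr 0%N 1%N _ _ _ unit_disc_domain G2_domain hol 0 L X unit_disc0
  (affine_cderiv _ _ _).
rewrite mul0mx addr0 alpha_disc; last exact: unit_disc0.
by rewrite mxE cabs0 expr0n subr0 divr1.
Qed.

Lemma alphaG2_ge (s : C) (b X : 'rV[C]_2) : cabs s <= 1 -> G2 b ->
  cabs (X 0 0 * (1 + s * b 0 1) + X 0 1 * (s * b 0 0)) /
    (1 - cabs (b 0 0 * (1 + s * b 0 1)) ^+ 2) <= alphaG2 b X.
Proof.
case: alpha_hcf => _ [alpha_disc contr] s1 Gb.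
have hol := G2_to_disc_holo s1.
have := contr 1%N 0%N _ _ _ G2_domain unit_disc_domain hol b _ X Gb
  (G2_to_disc_cderiv b s1).
by rewrite alpha_disc ?mulmx21E ?mxE //; case: hol => /(_ b Gb).
Qed.

Lemma alphaG2_0_e1 : alphaG2 0 e1 <= 1.
Proof.
have disc_e1 (z : 'rV[C]_1) : unit_disc z -> G2 (0 + z *m e1).
  by rewrite /unit_disc /G2 /= add0r !mulmx12E !mxE /= mulr0 cabs0 addr0 !mulr1.
have -> : e1 = mk1 1 *m e1 :> 'rV[C]_2 by apply: rV2P; rewrite mulmx12E mk1E mul1r.
by apply: le_trans (alphaG2_le_disc disc_e1 _) _; rewrite mk1E cabs1.
Qed.

Lemma alphaG2_0_e2 : alphaG2 0 e2 = 0.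
Proof.
have le_inv (r : R) : 0 < r -> alphaG2 0 e2 <= r^-1.
  move=> r0; have disc_e2 (z : 'rV[C]_1) : unit_disc z -> G2 (0 + z *m mk2 0 r%:C).
    by rewrite /G2 /= add0r !mulmx12E mk2E0 mulr0 cabs0 mul0r.
  have -> : e2 = mk1 r^-1%:C *m mk2 0 r%:C :> 'rV[C]_2.
    by apply: rV2P; rewrite mulmx12E mk1E !mxE /= ?mulr0 // -rmorphM mulVf ?gt_eqF.
  apply: le_trans (alphaG2_le_disc disc_e2 _) _.
  by rewrite mk1E cabsR ger0_norm // invr_ge0 ltW.
have := alphaG2_ge0 e2 G2_0; rewrite le0r => /orP[/eqP //|pos].
by have := le_inv (2 / alphaG2 0 e2); rewrite divr_gt0 // invf_div => /(_ isT); lra.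
Qed.

Lemma Wu_G2_0_e1 : Wu alphaG2 0 e1 <= 1.
Proof.
have alpha0_ge0 X : 0 <= alphaG2 0 X by exact: alphaG2_ge0 G2_0.
have m1 : Num.sqrt (m_eta alphaG2 0)%:R <= 1 :> R.
  have Ve2 : V_eta alphaG2 0 e2 by rewrite /V_eta /= eta_hat_eq0 ?alphaG2_0_e2.
  have : (m_eta alphaG2 0)%:R <= 1 :> R by rewrite lern1 m_eta_le1.
  by move/ler_wsqrtr; rewrite sqrtr1.
have W1 : Wtilde alphaG2 0 e1 <= 1 by exact: le_trans (Wtilde_le alpha0_ge0 _) alphaG2_0_e1.
by rewrite -[1]mulr1 ler_pM ?sqrtr_ge0.
Qed.

Section AxisPoint.
Variable eps : R.
Hypothesis eps01 : 0 < eps < 1.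

Let G2b : G2 (axis_pt eps).
Proof. by case/andP: eps01 => eps0 eps1; apply: G2_axis_pt; rewrite eps1 ltW. Qed.

Lemma alphaG2_axis_ge (s : C) (X : 'rV[C]_2) : cabs s <= 1 ->
  cabs (X 0 0 + X 0 1 * (s * eps%:C)) <= alphaG2 (axis_pt eps) X.
Proof.
move=> s1; have [eps0 eps1] := andP eps01.
apply: le_trans (alphaG2_ge X s1 G2b).
rewrite /axis_pt mk2E0 mk2E1 mulr0 addr0 !mulr1 cabsR ger0_norm; last exact: ltW.
have := cabs_ge0 (X 0 0 + X 0 1 * (s * eps%:C)).
rewrite ler_pdivlMr; nra.
Qed.

Lemma eta_hat_G2_axis_eq0 (X : 'rV[C]_2) : eta_hat alphaG2 (axis_pt eps) X = 0 -> X = 0.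
Proof.
move=> hat0.
have lin0 s : cabs s <= 1 -> X 0 0 + X 0 1 * (s * eps%:C) = 0.
  move=> s1; apply: cabs_eq0; apply/le_anti; rewrite cabs_ge0 andbT -hat0.
  apply: cseminorm_le_eta_hat (cseminorm_lin2 _) _ => Y.
  exact: alphaG2_axis_ge.
have p1 : X 0 0 + X 0 1 * (1 * eps%:C) = 0 by apply: lin0; rewrite cabs1.
have m1 : X 0 0 + X 0 1 * (-1 * eps%:C) = 0 by apply: lin0; rewrite cabsN cabs1.
have X1 : X 0 1 = 0.
  have /eqP : X 0 1 * (2 * eps%:C) = 0.
    rewrite -[RHS](subrr 0) -{1}p1 -m1; ring.
  have eps_neq0 : (eps == 0) = false by rewrite gt_eqF // (andP eps01).1.
  by rewrite !mulf_eq0 pnatr_eq0 fmorph_eq0 eps_neq0 /= orbF => /eqP.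
by apply: rV2P; rewrite mxE // -p1 X1 mul0r addr0.
Qed.

Lemma U_eta_G2_axis_full Y : U_eta alphaG2 (axis_pt eps) Y.
Proof.
move=> X /eta_hat_G2_axis_eq0 ->.
by rewrite /hdot big1 // => i _; rewrite mxE mul0r.
Qed.

Lemma alphaG2_axis_e2 : alphaG2 (axis_pt eps) e2 <= eps / (1 - eps).
Proof.
have [eps0 eps1] := andP eps01; set r := (1 - eps) / eps.
have r0 : 0 < r by rewrite divr_gt0 // subr_gt0.
have disc_e2 (z : 'rV[C]_1) : unit_disc z -> G2 (axis_pt eps + z *m mk2 0 r%:C).
  rewrite /unit_disc /G2 /= ![(_ + _ : 'rV[C]_2) 0 _]mxE !mulmx12E /axis_pt !mk2E0 !mk2E1 mulr0 addr0 add0r.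
  rewrite cabsM !cabsR !ger0_norm ?(ltW eps0) ?(ltW r0) // => z1.
  have epsr : eps * (1 + r) = 1 by rewrite /r mulrDr mulr1 mulrCA mulfV ?gt_eqF // mulr1 addrC subrK.
  by have := cabs_ge0 (z 0 0); nra.
have -> : e2 = mk1 r^-1%:C *m mk2 0 r%:C :> 'rV[C]_2.
  by apply: rV2P; rewrite mulmx12E mk1E !mxE /= ?mulr0 // -rmorphM mulVf ?gt_eqF.
apply: le_trans (alphaG2_le_disc disc_e2 _) _.
by rewrite mk1E cabsR ger0_norm ?invr_ge0 ?(ltW r0) // /r invf_div.
Qed.

(* Parallelogram law: average the bounds of [alphaG2_axis_ge] for [s = 1] and [s = -1]. *)
Lemma herm2_params_G2_axis : herm2_params alphaG2 (axis_pt eps) (herm2_diag 1 (eps ^+ 2)).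
Proof.
move=> X; rewrite herm2_form_diag mul1r.
set a := alphaG2 (axis_pt eps) X.
have sqr_le s : cabs s <= 1 -> cabs (X 0 0 + X 0 1 * (s * eps%:C)) ^+ 2 <= a ^+ 2.
  move=> s1; have h := alphaG2_axis_ge X s1.
  by rewrite ler_sqr ?nnegrE ?cabs_ge0 // (le_trans (cabs_ge0 _) h).
have sp : cabs (X 0 0 + X 0 1 * eps%:C) ^+ 2 <= a ^+ 2.
  by have := sqr_le 1; rewrite mul1r cabs1; apply.
have sm : cabs (X 0 0 - X 0 1 * eps%:C) ^+ 2 <= a ^+ 2.
  by have := sqr_le (-1); rewrite cabsN cabs1 mulN1r mulrN; apply.
have cw : cabs (X 0 1 * eps%:C) ^+ 2 = eps ^+ 2 * cabs (X 0 1) ^+ 2.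
  by rewrite cabsM cabsR ger0_norm ?exprMn 1?mulrC // ltW // (andP eps01).1.
have := cabs_parallelogram (X 0 0) (X 0 1 * eps%:C); rewrite cw => pgram.
apply/andP; split; first exact: addr_ge0 (sqr_ge0 _) (mulr_ge0 (sqr_ge0 _) (sqr_ge0 _)).
by have := lerD sp sm; rewrite pgram -mulr2n -(mulr_natl (a ^+ 2)) ler_pM2l.
Qed.

Lemma Wu_G2_axis_e1 : Num.sqrt 2 * (1 - eps) <= Wu alphaG2 (axis_pt eps) e1.
Proof.
have [eps0 eps1] := andP eps01.
have alpha_ge0 X : 0 <= alphaG2 (axis_pt eps) X by exact: alphaG2_ge0 G2b.
have [v [sv Kv v_max]] := s_eta2_spec alpha_ge0 U_eta_G2_axis_full.
have det_ge : eps ^+ 2 <= herm2_det v.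
  by have := v_max _ herm2_params_G2_axis; rewrite herm2_det_diag mul1r.
have a_ge0 : 0 <= v 0 0 by have /andP[] := Kv e1; rewrite herm2_form_e1.
have d_le : v 0 1 * (1 - eps) ^+ 2 <= eps ^+ 2.
  have /andP[_] := Kv e2; rewrite herm2_form_e2 => d_le.
  have := alphaG2_axis_e2; rewrite ler_pdivlMr ?subr_gt0 // => t_le.
  apply: le_trans (ler_wpM2r (sqr_ge0 _) d_le) _.
  rewrite -exprMn ler_sqr ?nnegrE ?(ltW eps0) //.
  by rewrite mulr_ge0 ?alpha_ge0 // subr_ge0 ltW.
have a_ge : (1 - eps) ^+ 2 <= v 0 0.
  have eps2 : 0 < eps ^+ 2 by rewrite exprn_gt0.
  rewrite -(ler_pM2l eps2); apply: le_trans (ler_wpM2r (sqr_ge0 _) det_ge) _.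
  move: d_le; rewrite /herm2_det; have := sqr_ge0 (v 0 2); have := sqr_ge0 (v 0 3).
  by have := sqr_ge0 (1 - eps); nra.
rewrite /Wu m_eta_full; last exact: U_eta_G2_axis_full.
rewrite /Wtilde sv hform_herm2 herm2_form_e1 ler_pM2l ?sqrtr_gt0 //.
rewrite -[1 - eps]ger0_norm; last by rewrite subr_ge0 ltW.
by rewrite -sqrtr_sqr /=; exact: ler_wsqrtr.
Qed.

End AxisPoint.

End ContractibleFamily.

End WuG2.

Theorem proposition3p3 (R : realType)
  (alpha : forall n : nat, set 'rV[R[i]]_n.+1 -> 'rV[R[i]]_n.+1 -> 'rV[R[i]]_n.+1 -> R) :
  holo_contractible_family alpha ->
  ~ usc_on (@G2 R) (Wu (alpha 1%N (@G2 R))).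
Proof.
move=> hcf usc.
have [delta [delta0 near0]] := usc 0 e1 G2_0 (1 / 4) (divr_gt0 ltr01 (ltr0n _ 4)).
pose eps := Num.min (delta / 2) (1 / 20 : R).
have eps0 : 0 < eps by rewrite lt_min !divr_gt0.
have eps_le : eps <= 1 / 20 by rewrite ge_min lexx orbT.
have eps_delta : eps <= delta / 2 by rewrite ge_min lexx.
have eps01 : 0 < eps < 1 by rewrite eps0 /=; lra.
have Gb : G2 (axis_pt eps) by apply: G2_axis_pt; rewrite (ltW eps0) /=; lra.
have Wu_near : Wu (alpha 1%N (@G2 R)) (axis_pt eps) e1 < Wu (alpha 1%N (@G2 R)) 0 e1 + 1 / 4.
  apply: near0 => //; last by rewrite subrr cnorm0.
  by rewrite subr0 cnorm_axis_pt ?(ltW eps0) //; lra.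
have sqrt2 : 7 / 5 <= Num.sqrt 2 :> R.
  rewrite -[7 / 5 : R]ger0_norm; last lra.
  rewrite -sqrtr_sqr; apply: ler_wsqrtr.
  by rewrite expr2; lra.
have := Wu_G2_axis_e1 hcf eps01; have := Wu_G2_0_e1 hcf; nra.
Qed.
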